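(* Let $R=\mathbb{Z}$ or $\mathbb{Z}[i]$, $1\leq k<n$, and let $A_0=(a_1|\dots|a_k)\in R^{n\times k}$ be a $k$-icube of norm $\lambda$ with $a_1$ primitive. Let $b_{k+1},\dots,b_n$ be an $R$-basis of $\Lambda=\{w\in R^n: a_j^*w=0,\ 1\leq j\leq k\}$ and $B=(a_1|\dots|a_k|b_{k+1}|\dots|b_n)$. Let $a=(\alpha_1,\dots,\alpha_n)^T$ with $\alpha_j=\overline{(-1)^{j+1}\det B_{j,1}}$, where $B_{j,1}$ is the matrix obtained from $B$ by deleting row $j$ and column $1$. Then $\overline{\det B}/\lambda\in R$ and $a=(\overline{\det B}/\lambda)\,a_1$.
   Context: A $k$-icube of norm $\lambda>0$ in $R^n$ is $(v_1|\dots|v_k)\in R^{n\times k}$ with $v_i^*v_j=\lambda$ if $i=j$ and $0$ otherwise. A vector is primitive if its entries have no common non-unit divisor in $R$. *)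

(* R = Z or Z[i] is modelled as a subring of algC. *)
From HB Require Import structures.
From mathcomp Require Import all_boot all_order all_algebra all_field.
Set Implicit Arguments. Unset Strict Implicit. Unset Printing Implicit Defensive.
Import Order.TTheory GRing.Theory Num.Theory.
Local Open Scope ring_scope.

Definition inR (gauss : bool) (x : algC) : bool :=
  if gauss then ('Re x \is a Num.int) && ('Im x \is a Num.int)
  else x \is a Num.int.

Definition vecR (gauss : bool) n (v : 'cV[algC]_n) : Prop :=
  forall i, inR gauss (v i 0).

Definition divR (gauss : bool) (d x : algC) : Prop :=
  exists r, inR gauss r /\ x = d * r.
Definition unitR (gauss : bool) (u : algC) : Prop :=
  inR gauss u /\ exists v, inR gauss v /\ u * v = 1.

Definition primitiveR (gauss : bool) n (v : 'cV[algC]_n) : Prop :=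
  forall d, inR gauss d -> (forall i, divR gauss d (v i 0)) -> unitR gauss d.

Definition dotC n (u v : 'cV[algC]_n) : algC := \sum_(l < n) (u l 0)^* * v l 0.

Definition icube (gauss : bool) n k (a : nat -> 'cV[algC]_n) (lam : algC) : Prop :=
  0 < lam /\ (forall i, (i < k)%N -> vecR gauss (a i)) /\
  forall i j, (i < k)%N -> (j < k)%N -> dotC (a i) (a j) = if i == j then lam else 0.

Definition inLambda (gauss : bool) n k (a : nat -> 'cV[algC]_n) (w : 'cV[algC]_n) : Prop :=
  vecR gauss w /\ forall j, (j < k)%N -> dotC (a j) w = 0.

Definition basisLambda (gauss : bool) n k (a b : nat -> 'cV[algC]_n) : Prop :=
  (forall j, (k <= j < n)%N -> inLambda gauss k a (b j)) /\
  (forall w, inLambda gauss k a w ->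
     exists c : nat -> algC, (forall j, inR gauss (c j)) /\
        w = \sum_(k <= j < n) c j *: b j) /\
  (forall c : nat -> algC, (forall j, inR gauss (c j)) ->
     \sum_(k <= j < n) c j *: b j = 0 -> forall j, (k <= j < n)%N -> c j = 0).

(* B = (a_1 | ... | a_k | b_{k+1} | ... | b_n), 0-based columns *)
Definition Bmat n k (a b : nat -> 'cV[algC]_n) : 'M[algC]_n :=
  \matrix_(i < n, j < n) (if (j < k)%N then a j i 0 else b j i 0).

From HB Require Import structures.
From mathcomp Require Import all_boot all_order all_algebra all_field.
Set Implicit Arguments. Unset Strict Implicit. Unset Printing Implicit Defensive.
Import Order.TTheory GRing.Theory Num.Theory.
Local Open Scope ring_scope.

(* Since [a_1^* B = lam e_1^T] (the other columns of [B] are orthogonal to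
   [a_1]), multiplying on the right by [\adj B] gives
   [det B * a_1^* = lam * row 1 (\adj B)]; conjugating, [alpha = t a_1] with
   [t = conj (det B) / lam], as [lam] is real.  The entries of [alpha] are
   cofactors of a matrix over [R], so [t a_1] lies in [R^n].  As [Z] and [Z[i]]
   are Euclidean for [|.|^2], a denominator [d] of [t] of least norm divides
   every entry of [a_1]; primitivity makes [d] a unit, whence [t] is in [R]. *)

Definition ringR (g : bool) : {pred algC} := fun x => inR g x.

Lemma ringRE g x : (x \in ringR g) = inR g x.
Proof. by []. Qed.

Lemma inR_int g x : x \is a Num.int -> inR g x.
Proof.
case: g => //= xi; have xr := Rreal_int xi.
by rewrite (Creal_ReP _ xr) (Creal_ImP _ xr) xi int_num0.
Qed.

Fact ringR_subring_closed g : subring_closed (ringR g).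
Proof.
split; first exact: inR_int.
  case: g => x y; rewrite !ringRE /=; last exact: rpredB.
  by move=> /andP[? ?] /andP[? ?]; rewrite !raddfB /= !rpredB.
case: g => x y; rewrite !ringRE /=; last exact: rpredM.
by move=> /andP[? ?] /andP[? ?]; rewrite ReM ImM ?(rpredB, rpredD, rpredM).
Qed.

HB.instance Definition _ g :=
  GRing.isSubringClosed.Build algC (ringR g) (ringR_subring_closed g).

Lemma inR_conj g x : inR g x -> inR g x^*.
Proof.
case: g => /=; last by move=> xi; rewrite conj_Creal // Rreal_int.
by move=> /andP[? ?]; rewrite Re_conj Im_conj rpredN; apply/andP.
Qed.

Lemma inR_det g n (A : 'M[algC]_n) :
  (forall i j, inR g (A i j)) -> inR g (\det A).
Proof.
move=> AR; rewrite -ringRE /determinant; apply: rpred_sum => s _.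
apply: rpredM; first by apply: rpredX; rewrite rpredN rpred1.
by apply: rpred_prod => i _; apply: AR.
Qed.

Lemma inR_cofactor g n (A : 'M[algC]_n) i j :
  (forall i j, inR g (A i j)) -> inR g (cofactor A i j).
Proof.
move=> AR; rewrite -ringRE; apply: rpredM.
  by apply: rpredX; rewrite rpredN rpred1.
by apply: inR_det => r s; rewrite !mxE.
Qed.

Lemma real_near_int (x : algC) : x \is Num.real ->
  exists2 z, z \is a Num.int & `|x - z| <= 2^-1.
Proof.
move=> xr; have xhr : x + 2^-1 \is Num.real by rewrite rpredD // rpredV realn.
exists (Num.floor (x + 2^-1))%:~R; first exact: intr_int.
set z := _%:~R; have zr : z \is Num.real := Rreal_int (intr_int _ _).
have lb : z <= x + 2^-1 := real_floor_le xhr.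
have := real_floorD1_gt xhr; rewrite intrD -/z -ltrBrDr => ub.
have half : (1 : algC) - 2^-1 = 2^-1 by rewrite {1}[1]splitr mul1r addrK.
rewrite real_ler_norml ?rpredB //; apply/andP; split.
  by rewrite lerNl opprB lerBlDr addrC.
by move: ub; rewrite -addrA half => ub; rewrite lerBlDr addrC ltW.
Qed.

Lemma euclidR g y d : inR g y -> inR g d -> d != 0 ->
  exists2 q, inR g q & `|y - q * d| ^+ 2 <= 2^-1 * `|d| ^+ 2.
Proof.
move=> yR dR d0; set w := y / d.
suff [q qR wq] : exists2 q, inR g q & `|w - q| ^+ 2 <= 2^-1.
  exists q => //; have -> : y - q * d = (w - q) * d by rewrite mulrBl divfK.
  by rewrite normrM exprMn ler_wpM2r // exprn_ge0.
have sqr_le (u : algC) : u \is Num.real -> `|u| <= 2^-1 -> u ^+ 2 <= 2^-1 ^+ 2.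
  by move=> ur u_le; rewrite -[u ^+ 2]real_normK // !expr2 ler_pM.
have two_quarters : (2^-1 : algC) ^+ 2 + 2^-1 ^+ 2 = 2^-1.
  by rewrite -mulr2n -[_ *+ 2]mulr_natr expr2 -mulrA mulVf ?mulr1 // pnatr_eq0.
case: g yR dR => /= yR dR.
- have [zr zrZ Hr] := real_near_int (Creal_Re w).
  have [zi ziZ Hi] := real_near_int (Creal_Im w).
  have [zrr zir] := (Rreal_int zrZ, Rreal_int ziZ).
  exists (zr + 'i * zi); first by rewrite Re_rect // Im_rect // zrZ ziZ.
  rewrite {1}[w]Crect subC_rect normC2_rect ?rpredB //.
  by rewrite -two_quarters lerD // sqr_le ?rpredB.
- have wr : w \is Num.real by rewrite rpredM ?rpredV // Rreal_int.
  have [z zZ Hz] := real_near_int wr; exists z => //.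
  have wzr : w - z \is Num.real by rewrite rpredB // Rreal_int.
  rewrite real_normK //; apply: le_trans (sqr_le _ wzr Hz) _.
  by rewrite -[X in _ <= X]two_quarters lerDl exprn_ge0 // invr_ge0 ler0n.
Qed.

Lemma normR_ge1 g d : inR g d -> d != 0 -> 1 <= `|d| ^+ 2.
Proof.
case: g => /= [/andP[reZ imZ]|dZ] d0; last first.
  by rewrite intr_normK // sqr_intr_ge1.
have sqr_ge0 : forall x : algC, x \is a Num.int -> 0 <= x ^+ 2.
  by move=> x xZ; rewrite -intr_normK // exprn_ge0.
rewrite normC2_Re_Im; have [re0|re0] := eqVneq ('Re d) 0.
  have im0 : 'Im d != 0.
    by apply: contra d0 => /eqP im0; rewrite [d]Crect re0 im0 mulr0 addr0.
  by rewrite re0 expr0n add0r sqr_intr_ge1.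
by apply: le_trans (sqr_intr_ge1 reZ re0) _; rewrite lerDl sqr_ge0.
Qed.

Section ScalePrimitive.

Variables (g : bool) (n : nat) (v : 'cV[algC]_n) (t : algC).
Hypotheses (v_prim : primitiveR g v) (vR : vecR g v)
  (tvR : forall i, inR g (t * v i 0)).

(* Remainders of Euclidean division by a denominator [d] of [t] are again
   denominators of [t], of at most half the norm. *)
Lemma inR_of_smaller_denominators d : inR g d -> inR g (t * d) -> d != 0 ->
  (forall r, inR g r -> inR g (t * r) -> r != 0 ->
     `|r| ^+ 2 <= 2^-1 * `|d| ^+ 2 -> inR g t) ->
  inR g t.
Proof.
move=> dR tdR d0 smaller; case tR: (inR g t) => //.
have d_div : forall i, divR g d (v i 0).
  move=> i; have viR := vR i; have tviR := tvR i.
  have [q qR rem_le] := euclidR viR dR d0.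
  have [rem0|rem0] := eqVneq (v i 0 - q * d) 0.
    by exists q; split => //; apply/eqP; rewrite mulrC -subr_eq0 rem0.
  have remR : inR g (v i 0 - q * d) by rewrite -ringRE rpredB ?rpredM.
  have t_remR : inR g (t * (v i 0 - q * d)).
    by rewrite mulrBr mulrCA -ringRE rpredB // rpredM.
  by move: tR; rewrite (smaller _ remR t_remR rem0 rem_le).
have [_ [e [eR de1]]] := v_prim dR d_div.
by rewrite -tR -[t]mulr1 -de1 mulrA -ringRE rpredM.
Qed.

Lemma inR_scale_primitive : v != 0 -> inR g t.
Proof.
move=> v0; have [i0 vi0|vz] := pickP (fun i => v i 0 != 0); last first.
  case/eqP: v0; apply/matrixP => i j.
  by rewrite (ord1 j) mxE; apply/eqP/negbFE/vz.
suff: forall (m : nat) d, inR g d -> inR g (t * d) -> d != 0 ->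
    `|d| ^+ 2 < m%:R -> inR g t.
  by apply; [apply: vR | apply: tvR | | apply: archi_boundP; rewrite exprn_ge0].
elim=> [|m IHm] d dR tdR d0 d_lt.
  by have := le_lt_trans (normR_ge1 dR d0) d_lt; rewrite ltr10.
apply: (inR_of_smaller_denominators dR tdR d0) => r rR trR r0 r_le.
apply: (IHm r) => //; rewrite -(ltrD2r 1) natr1; apply: le_lt_trans d_lt.
apply: le_trans (_ : `|r| ^+ 2 + `|r| ^+ 2 <= _).
  by rewrite lerD2l (normR_ge1 rR r0).
by rewrite -mulr2n -mulr_natr -ler_pdivlMr ?ltr0n // mulrC.
Qed.

End ScalePrimitive.

Lemma detZ_row_adj (R : comPzRingType) n (B : 'M[R]_n) (u : 'rV_n) c j0 :
  u *m B = c *: delta_mx 0 j0 -> \det B *: u = c *: row j0 (\adj B).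
Proof.
by move=> uB; rewrite -mul_mx_scalar -mul_mx_adj mulmxA uB -scalemxAl -rowE.
Qed.

Lemma conj_cofactor_col n (B : 'M[algC]_n) (v : 'cV_n) (lam : algC) j0 :
  lam \is Num.real -> lam != 0 ->
  (forall j, dotC v (col j B) = if j == j0 then lam else 0) ->
  \col_i (cofactor B i j0)^* = ((\det B)^* / lam) *: v.
Proof.
move=> lam_real lam0 vB.
have uB : (map_mx (fun x => x^*) v)^T *m B = lam *: delta_mx 0 j0.
  apply/matrixP => i j; rewrite (ord1 i) !mxE eqxx /=.
  have -> : lam * (j == j0)%:R = dotC v (col j B).
    by rewrite vB; case: (j == j0); rewrite ?mulr1 ?mulr0.
  by apply: eq_bigr => l _; rewrite !mxE.
apply/matrixP => i j; rewrite (ord1 j) !mxE.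
have := congr1 (fun M : 'rV_n => M 0 i) (detZ_row_adj uB); rewrite !mxE /= => E.
apply: (mulfI lam0); rewrite mulrA [lam * (_ / _)]mulrC divfK //.
by rewrite -[in LHS](conj_Creal lam_real) -rmorphM -E rmorphM /= conjCK.
Qed.

Section Bmat.

Variables (g : bool) (n k : nat) (a b : nat -> 'cV[algC]_n) (lam : algC).
Hypotheses (cube : icube g k a lam) (basis : basisLambda g k a b).

Lemma Bmat_inR i j : inR g (Bmat k a b i j).
Proof.
have [_ [aR _]] := cube; have [bLam _] := basis.
rewrite mxE; case: ltnP => jk; first exact: aR.
by have [] := bLam j (introT andP (conj jk (ltn_ord j))).
Qed.

Lemma dotC_Bmat i (j : 'I_n) : (i < k)%N ->
  dotC (a i) (col j (Bmat k a b)) = if j == i :> nat then lam else 0.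
Proof.
have [_ [_ adot]] := cube; have [bLam _] := basis.
move=> ik.
transitivity (if (j < k)%N then dotC (a i) (a j) else dotC (a i) (b j)).
  by case: ifP => jk; apply: eq_bigr => l _; rewrite !mxE jk.
case: ltnP => jk; first by rewrite (adot _ _ ik jk) eq_sym.
have [_ b_orth] := bLam j (introT andP (conj jk (ltn_ord j))).
by rewrite (gtn_eqF (leq_trans ik jk)) b_orth.
Qed.

End Bmat.

Theorem mainTheorem16 (gauss : bool) (n k : nat) (hk1 : (1 <= k)%N) (hkn : (k < n)%N)
  (n0 : (0 < n)%N)
  (a b : nat -> 'cV[algC]_n) (lam : algC) :
  icube gauss k a lam ->
  primitiveR gauss (a 0%N) ->
  basisLambda gauss k a b ->
  let B := Bmat k a b in
  let alpha := \col_(i < n) (cofactor B i (Ordinal n0))^* in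
  inR gauss ((\det B)^* / lam) /\ alpha = ((\det B)^* / lam) *: a 0%N.
Proof.
move=> cube a0_prim basis B alpha; have [lam_gt0 [aR adot]] := cube.
have alphaE : alpha = ((\det B)^* / lam) *: a 0%N.
  apply: conj_cofactor_col (gtr0_real lam_gt0) (lt0r_neq0 lam_gt0) _ => j.
  by rewrite (dotC_Bmat cube basis j hk1).
split=> //.
have a0_neq0 : a 0%N != 0.
  apply: contraTneq lam_gt0 => a0; have := adot _ _ hk1 hk1.
  by rewrite eqxx /dotC a0 big1 => [<-|l _]; rewrite ?ltxx // mxE mulr0.
apply: (inR_scale_primitive a0_prim (aR _ hk1) _ a0_neq0) => i.
have := congr1 (fun M : 'cV_n => M i 0) alphaE; rewrite !mxE => <-.
exact/inR_conj/inR_cofactor/(Bmat_inR cube basis).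
Qed.
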